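(* Let $d,N\in\mathbb{N}$ and let $C:\mathbb{R}^d\times\mathbb{R}^d\to\mathbb{R}$ be smooth with $C(x,x')=C(-x,-x')$ for all $x,x'$. For multi-indices $\alpha,\beta\in\mathbb{N}_0^d$ let $C_{\alpha,\beta}=\partial_{x_1}^{\alpha_1}\cdots\partial_{x_d}^{\alpha_d}\partial_{x'_1}^{\beta_1}\cdots\partial_{x'_d}^{\beta_d}C$. Let $K=\binom{N+d}{N}$ and $R=(C_{\alpha,\beta}(0,0))_{\alpha,\beta\in\mathbb{N}_0^d,\,|\alpha|,|\beta|\le N}\in\mathbb{R}^{K\times K}$, assumed invertible, let $b=R^{-1}(1,0,\dots,0)^T$ (the first coordinate corresponding to $\alpha=0$), and define $\eta(x)=\sum_{|\alpha|\le N}b_\alpha C_{\alpha,0}(0,x)$. Then $\nabla^j\eta(0)=0$ for all odd integers $j\in\mathbb{N}$.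
   Context: $\nabla^j\eta(0)$ denotes the full derivative of order $j$ (all partial derivatives of order $j$) at $0$. *)

From HB Require Import structures.
From mathcomp Require Import all_boot all_order all_algebra.
From mathcomp Require Import all_classical all_reals all_analysis.
Set Implicit Arguments. Unset Strict Implicit. Unset Printing Implicit Defensive.
Import Order.TTheory GRing.Theory Num.Theory.
Import numFieldNormedType.Exports.
Local Open Scope ring_scope.

Section Defs.
Variable R : realType.

Definition evec (n : nat) (i : 'I_n) : 'rV[R]_n := delta_mx 0 i.

Definition pder (n : nat) (i : 'I_n) (f : 'rV[R]_n -> R) : 'rV[R]_n -> R :=
  fun x => 'D_(evec i) f x.

(* iterated partial derivative along the sequence of coordinates s
   (first element of s applied last) *)
Definition pders (n : nat) (s : seq 'I_n) (f : 'rV[R]_n -> R) : 'rV[R]_n -> R :=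
  foldr (@pder n) f s.

Definition smooth (n : nat) (f : 'rV[R]_n -> R) : Prop :=
  forall s : seq 'I_n,
    continuous (pders s f) /\
    (forall (i : 'I_n) (x : 'rV[R]_n), derivable (pders s f) x (evec i)).

Definition mpder (n : nat) (g : 'I_n -> nat) (f : 'rV[R]_n -> R) : 'rV[R]_n -> R :=
  foldr (fun i h => iter (g i) (pder i) h) f (enum 'I_n).

End Defs.

Definition midx (d N : nat) : predArgType :=
  {a : {ffun 'I_d -> 'I_N.+1} | (\sum_(i < d) (a i : nat) <= N)%N}.

Lemma midx0_proof (d N : nat) :
  (\sum_(i < d) (([ffun => ord0] : {ffun 'I_d -> 'I_N.+1}) i : nat) <= N)%N.
Proof. by rewrite big1 // => i _; rewrite ffunE. Qed.

Definition midx0 (d N : nat) : midx d N := exist (fun a : {ffun 'I_d -> 'I_N.+1} => (\sum_(i < d) (a i : nat) <= N)%N) [ffun => ord0] (midx0_proof d N).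

Definition jidx (d N : nat) (a b : midx d N) : 'I_(d + d) -> nat :=
  fun k => match fintype.split k with inl i => val a i | inr j => val b j end.

(* C_{alpha,beta}, for C given as a function of the concatenated vector (x, x') *)
Definition Cab (R : realType) (d N : nat) (C : 'rV[R]_(d + d) -> R)
  (a b : midx d N) : 'rV[R]_d -> 'rV[R]_d -> R :=
  fun x x' => mpder (jidx a b) C (row_mx x x').

(* the matrix R = (C_{alpha,beta}(0,0)), indexed via enum_rank of midx d N;
   its size #|midx d N| equals binomial(N+d, N) *)
Definition Rmat (R : realType) (d N : nat) (C : 'rV[R]_(d + d) -> R)
  : 'M[R]_#|midx d N| :=
  \matrix_(i, j) Cab C (enum_val i) (enum_val j) 0 0.

Definition bvec (R : realType) (d N : nat) (C : 'rV[R]_(d + d) -> R)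
  : 'cV[R]_#|midx d N| :=
  invmx (Rmat N C) *m delta_mx (enum_rank (midx0 d N)) 0.

Definition etaC (R : realType) (d N : nat) (C : 'rV[R]_(d + d) -> R)
  : 'rV[R]_d -> R :=
  fun x => \sum_(i < #|midx d N|) bvec N C i 0 * Cab C (enum_val i) (midx0 d N) 0 x.

From HB Require Import structures.
From mathcomp Require Import all_boot all_order all_algebra.
From mathcomp Require Import all_classical all_reals all_analysis.
Import Order.TTheory GRing.Theory Num.Theory.
Import numFieldNormedType.Exports.
Local Open Scope ring_scope.
Local Open Scope classical_set_scope.
Set Implicit Arguments. Unset Strict Implicit.

(* C is even, so a partial derivative of C of order k satisfies
   D C (z) = (-1)^k D C (-z); hence every odd-order derivative of C vanishes
   at 0. The matrix R therefore never couples multi-indices of different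
   parity, and as the right-hand side e_0 is supported on even multi-indices,
   so is b = R^-1 e_0. A derivative of eta of odd order j at 0 is a combination
   of derivatives of C at 0 of order |alpha| + j, weighted by b_alpha; the
   weight vanishes for odd |alpha| and the derivative for even |alpha|. *)

Section DeriveReflection.
Variables (R : numFieldType) (V W : normedModType R).

Lemma cvg_oppr_dnbhs0 : -%R @ (0 : R)^' --> (0 : R)^'.
Proof.
move=> A /nbhs_normP[e e0 Ae]; apply/nbhs_normP; exists e => //= h.
rewrite /= !sub0r !normrN => he h0; apply: Ae; rewrite /= ?sub0r ?normrN ?oppr_eq0 //.
Qed.

Lemma derive_compN_cvg (f : V -> W) (x v : V) : derivable f (- x) v ->
  (fun h => h^-1 *: ((f \o -%R \o shift x) (h *: v) - (f \o -%R) x)) @ 0^'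
    --> - 'D_v f (- x).
Proof.
move=> df; set q := fun h : R => h^-1 *: ((f \o shift (- x)) (h *: v) - f (- x)).
have -> : (fun h => h^-1 *: ((f \o -%R \o shift x) (h *: v) - (f \o -%R) x)) =
    - (q \o -%R).
  by apply/funext => h; rewrite !fctE /q /= invrN !scaleNr opprK opprD.
exact: (cvgN (cvg_comp _ _ cvg_oppr_dnbhs0 df)).
Qed.

Lemma derivable_compN (f : V -> W) (x v : V) :
  derivable f (- x) v -> derivable (f \o -%R) x v.
Proof.
by move=> df; apply/cvg_ex; exists (- 'D_v f (- x)); exact: derive_compN_cvg.
Qed.

Lemma derive_compN (f : V -> W) (x v : V) : derivable f (- x) v ->
  'D_v (f \o -%R) x = - 'D_v f (- x).
Proof. by move=> df; apply: cvg_lim; [|exact: derive_compN_cvg]. Qed.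

End DeriveReflection.

Section IteratedPartials.
Variables (R : realType) (n : nat).
Implicit Types (f : 'rV[R]_n -> R) (s t : seq 'I_n).

Lemma pders_cat s t f : pders (s ++ t) f = pders s (pders t f).
Proof. by rewrite /pders foldr_cat. Qed.

Lemma pders_nseq k (i : 'I_n) f : pders (nseq k i) f = iter k (pder i) f.
Proof. by elim: k => //= k ->. Qed.

Definition mpder_seq (g : 'I_n -> nat) : seq 'I_n :=
  flatten [seq nseq (g i) i | i <- enum 'I_n].

Lemma mpderE (g : 'I_n -> nat) f : mpder g f = pders (mpder_seq g) f.
Proof.
rewrite /mpder /mpder_seq; elim: (enum 'I_n) => //= i r IH.
by rewrite pders_cat pders_nseq IH.
Qed.

Lemma size_mpder_seq (g : 'I_n -> nat) : size (mpder_seq g) = (\sum_i g i)%N.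
Proof.
rewrite /mpder_seq -big_enum /=; elim: (enum 'I_n) => [|i r IH].
  by rewrite big_nil.
by rewrite big_cons /= size_cat size_nseq IH.
Qed.

Lemma smooth_pders s f : smooth f -> smooth (pders s f).
Proof. by move=> sf t; rewrite -pders_cat; exact: sf. Qed.

Lemma pders_even s f : smooth f -> (forall z, f (- z) = f z) ->
  forall z, pders s f z = (-1) ^+ size s * pders s f (- z).
Proof.
move=> sf fN; elim: s => [|i s IH] z /=; first by rewrite fN mul1r.
have df y : derivable (pders s f) y (evec R i) := (sf s).2 i y.
rewrite /pder {1}(_ : pders s f = (-1) ^+ size s \*: (pders s f \o -%R)); last first.
  by apply/funext => y; rewrite IH.
rewrite deriveZ ?derive_compN ?opprK //; last exact: derivable_compN.
by rewrite exprS mulN1r mulNr -mulrN.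
Qed.

Lemma pders_odd_at0 s f : smooth f -> (forall z, f (- z) = f z) ->
  odd (size s) -> pders s f 0 = 0.
Proof.
move=> sf fN odd_s; have := pders_even s sf fN 0.
by rewrite oppr0 -signr_odd odd_s expr1 mulN1r => /esym/eqP; rewrite eqNr => /eqP.
Qed.

Lemma pders_sum_scale k (c : 'I_k -> R) (g : 'I_k -> 'rV[R]_n -> R) s :
  (forall j t x (i : 'I_n), derivable (pders t (g j)) x (evec R i)) ->
  pders s (fun x => \sum_j c j * g j x) = (fun x => \sum_j c j * pders s (g j) x).
Proof.
move=> dg; elim: s => //= i s IH; rewrite IH /pder; apply/funext => x.
have -> : (fun y => \sum_j c j * pders s (g j) y) = \sum_j c j \*: pders s (g j).
  by apply/funext => y; rewrite fct_sumE.
rewrite derive_sum; last by move=> j; apply: derivableZ.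
by apply: eq_bigr => j _; rewrite deriveZ.
Qed.

End IteratedPartials.

Section RightBlock.
Variables (R : realType) (m n : nat) (x0 : 'rV[R]_m).
Implicit Types (f : 'rV[R]_(m + n) -> R).

Lemma evec_rshift (j : 'I_n) : evec R (rshift m j) = row_mx 0 (evec R j).
Proof. by rewrite /evec delta_mx_rshift. Qed.

Lemma difference_quotient_row_mxr f (j : 'I_n) (y : 'rV[R]_n) :
  (fun h : R => h^-1 *: (((fun y => f (row_mx x0 y)) \o shift y) (h *: evec R j)
                           - f (row_mx x0 y))) =
  (fun h : R => h^-1 *: ((f \o shift (row_mx x0 y)) (h *: evec R (rshift m j))
                           - f (row_mx x0 y))).
Proof.
by apply/funext => h; rewrite /= evec_rshift scale_row_mx scaler0 add_row_mx add0r.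
Qed.

Lemma pder_row_mxr f (j : 'I_n) (y : 'rV[R]_n) :
  pder j (fun y => f (row_mx x0 y)) y = pder (rshift m j) f (row_mx x0 y).
Proof. by rewrite /pder /derive difference_quotient_row_mxr. Qed.

Lemma derivable_row_mxr f (j : 'I_n) (y : 'rV[R]_n) :
  derivable f (row_mx x0 y) (evec R (rshift m j)) ->
  derivable (fun y => f (row_mx x0 y)) y (evec R j).
Proof. by rewrite /derivable difference_quotient_row_mxr. Qed.

Lemma pders_row_mxr f (s : seq 'I_n) :
  pders s (fun y => f (row_mx x0 y)) =
  (fun y => pders (map (@rshift m n) s) f (row_mx x0 y)).
Proof. by elim: s => //= j s IH; apply/funext => y; rewrite IH pder_row_mxr. Qed.

Lemma derivable_pders_row_mxr f (s : seq 'I_n) (y : 'rV[R]_n) (j : 'I_n) :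
  smooth f -> derivable (pders s (fun y => f (row_mx x0 y))) y (evec R j).
Proof. by move=> sf; rewrite pders_row_mxr; apply: derivable_row_mxr; exact: (sf _).2. Qed.

End RightBlock.

Lemma solve_block_diag_support (K : comUnitRingType) n (M : 'M[K]_n) (p : pred 'I_n)
    (b c : 'cV[K]_n) :
  M \in unitmx -> (forall i j, p i != p j -> M i j = 0) ->
  (forall i, p i -> c i 0 = 0) -> M *m b = c ->
  forall i, p i -> b i 0 = 0.
Proof.
move=> Mu Mblock c_p Mb.
pose b' := \col_i (if p i then 0 else b i 0).
have Mb' : M *m b' = c.
  apply/matrixP => i k; rewrite (ord1 k) !mxE; have [pi | npi] := boolP (p i).
    rewrite c_p // big1 // => j _; rewrite mxE.
    by case: ifP => pj; rewrite ?mulr0 // Mblock ?mul0r // pi pj.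
  rewrite -Mb mxE; apply: eq_bigr => j _; rewrite mxE.
  by case: ifP => pj //; rewrite mulr0 Mblock ?mul0r // pj (negbTE npi).
have -> : b = b' by rewrite -(mulKmx Mu b) -(mulKmx Mu b') Mb Mb'.
by move=> i pi; rewrite mxE pi.
Qed.

Section MultiIndices.
Variables (d N : nat).
Implicit Types (a b : midx d N).

Definition mdeg a : nat := \sum_(i < d) (val a i : nat).

Lemma mdeg_midx0 : mdeg (midx0 d N) = 0%N.
Proof. by rewrite /mdeg big1 // => i _; rewrite ffunE. Qed.

Lemma sum_jidx a b : (\sum_k jidx a b k)%N = (mdeg a + mdeg b)%N.
Proof.
rewrite big_split_ord; congr (_ + _)%N; apply: eq_bigr => k _.
  by rewrite /jidx (unsplitK (inl k : 'I_d + 'I_d)).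
by rewrite /jidx (unsplitK (inr k : 'I_d + 'I_d)).
Qed.

Variables (R : realType) (C : 'rV[R]_(d + d) -> R).

Lemma CabE a b x x' : Cab C a b x x' = pders (mpder_seq (jidx a b)) C (row_mx x x').
Proof. by rewrite /Cab mpderE. Qed.

Lemma size_mpder_seq_jidx a b : size (mpder_seq (jidx a b)) = (mdeg a + mdeg b)%N.
Proof. by rewrite size_mpder_seq sum_jidx. Qed.

Hypotheses (sC : smooth C) (C_even : forall z, C (- z) = C z).

Lemma Cab_odd_at0 a b : odd (mdeg a + mdeg b) -> Cab C a b 0 0 = 0.
Proof. by move=> odd_ab; rewrite CabE row_mx0 pders_odd_at0 // size_mpder_seq_jidx. Qed.

Lemma bvec_odd_mdeg (i : 'I_#|midx d N|) : Rmat N C \in unitmx ->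
  odd (mdeg (enum_val i)) -> bvec N C i 0 = 0.
Proof.
move=> RU; apply: (solve_block_diag_support RU
  (p := fun i => odd (mdeg (enum_val i))) (c := delta_mx (enum_rank (midx0 d N)) 0)).
- move=> k l parity_kl; rewrite mxE Cab_odd_at0 // oddD -negb_eqb.
  exact: parity_kl.
- move=> k odd_k; rewrite mxE; case: eqP => [k0 | _] //.
  by move: odd_k; rewrite k0 enum_rankK mdeg_midx0.
- by rewrite /bvec mulKVmx.
Qed.

End MultiIndices.

Theorem mainTheorem5 (R : realType) (d N : nat) (C : 'rV[R]_(d + d) -> R) :
  smooth C ->
  (forall x x' : 'rV[R]_d, C (row_mx x x') = C (row_mx (- x) (- x'))) ->
  Rmat N C \in unitmx ->
  forall s : seq 'I_d, odd (size s) -> pders s (etaC N C) 0 = 0.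
Proof.
move=> sC HC RU s odd_s.
have C_even z : C (- z) = C z by rewrite -(hsubmxK z) opp_row_mx -HC.
pose u (i : 'I_#|midx d N|) := mpder_seq (jidx (enum_val i) (midx0 d N)).
have -> : etaC N C = fun x => \sum_i bvec N C i 0 * pders (u i) C (row_mx 0 x).
  by apply/funext => x; apply: eq_bigr => i _; rewrite CabE.
rewrite pders_sum_scale; last first.
  by move=> i t x j; apply: derivable_pders_row_mxr; exact: smooth_pders.
rewrite big1 // => i _; rewrite pders_row_mxr -pders_cat row_mx0.
have [odd_i | even_i] := boolP (odd (mdeg (enum_val i))).
  by rewrite bvec_odd_mdeg ?mul0r.
rewrite pders_odd_at0 ?mulr0 // size_cat size_map size_mpder_seq_jidx.
by rewrite mdeg_midx0 addn0 oddD odd_s (negbTE even_i).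
Qed.
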